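(* Let $(X,\Sigma)$ be a measurable space and $\mathscr{A}=\{\mathsf{A}(\cdot|E)\colon E\in\Sigma\}$ a family of conditional aggregation operators (with paving $\Sigma$). Consider the property (P): $\boldsymbol{\mu}_{\mathscr{A}}(f,t)=\mu_t(\{x\in X\colon f(x)\ge t\})$ for every $t>0$, every $f\in\mathbf{F}\setminus\{0_X\}$ and every family $\boldsymbol{\mu}=(\mu_t)_{t\ge0}$ of monotone measures on $\Sigma$. (a) If $\Sigma=\{\emptyset,X\}$, then (P) holds if and only if $\mathsf{A}(\cdot|X)$ is idempotent, i.e. $\mathsf{A}(b\mathbf{1}_X|X)=b$ for all $b\in(0,\infty)$. (b) If $\Sigma\ne\{\emptyset,X\}$, then (P) holds if and only if $\mathsf{A}(f|E)=\inf_{x\in E}f(x)$ for all $f\in\mathbf{F}$ and all $E\in\Sigma\setminus\{\emptyset\}$.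
   Context: $0_X$ is the zero function on $X$. $\Sigma^0=\Sigma\setminus\{\emptyset\}$. $\mathbf{F}$ denotes the set of all $\Sigma$-measurable, nonnegative, bounded functions $f\colon X\to[0,\infty)$. A monotone measure is a map $\mu\colon\Sigma\to[0,\infty]$ with $\mu(B)\le\mu(C)$ whenever $B\subseteq C$, $\mu(\emptyset)=0$ and $\mu(X)>0$. For $E\in\Sigma^0$, a conditional aggregation operator (CAO) w.r.t. $E$ is a map $\mathsf{A}(\cdot|E)\colon\mathbf{F}\to[0,\infty]$ such that (C1) $\mathsf{A}(f|E)\le\mathsf{A}(g|E)$ whenever $f(x)\le g(x)$ for all $x\in E$, and (C2) $\mathsf{A}(\mathbf{1}_{X\setminus E}|E)=0$. Here $\mathsf{A}(\cdot|E)$ is a CAO w.r.t. $E$ for each $E\in\Sigma^0$ and $\mathsf{A}(\cdot|\emptyset)=\infty$. The generalized level measure is $\boldsymbol{\mu}_{\mathscr{A}}(f,t)=\sup\{\mu_t(E)\colon \mathsf{A}(f|E)\ge t,\ E\in\Sigma\}$ for $t\ge0$. *)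

From HB Require Import structures.
From mathcomp Require Import all_boot all_order all_algebra.
From mathcomp Require Import all_classical all_reals all_analysis.
Set Implicit Arguments. Unset Strict Implicit. Unset Printing Implicit Defensive.
Import Order.TTheory GRing.Theory Num.Theory.
Local Open Scope classical_set_scope.
Local Open Scope ring_scope.

Section Defs.
Context {R : realType} {d : measure_display} {X : measurableType d}.

Definition inF (f : X -> R) : Prop :=
  [/\ measurable_fun setT f, (forall x, 0 <= f x) & exists M : R, forall x, f x <= M].

Definition monotone_measure (mu : set X -> \bar R) : Prop :=
  [/\ (forall B C, measurable B -> measurable C -> B `<=` C -> (mu B <= mu C)%E),
      mu set0 = 0%E & (0 < mu setT)%E].

Definition CAO_family (A : (X -> R) -> set X -> \bar R) : Prop :=
  [/\ forall E, measurable E -> E !=set0 ->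
        [/\ (forall f, inF f -> (0 <= A f E)%E),
            (forall f g, inF f -> inF g -> (forall x, E x -> f x <= g x) ->
                (A f E <= A g E)%E)
          & A (\1_(~` E)) E = 0%E]
    & forall f, inF f -> A f set0 = +oo%E].

Definition gen_level_measure (A : (X -> R) -> set X -> \bar R)
  (mu : R -> set X -> \bar R) (f : X -> R) (t : R) : \bar R :=
  ereal_sup [set mu t E | E in [set E | measurable E /\ (t%:E <= A f E)%E]].

Definition propP (A : (X -> R) -> set X -> \bar R) : Prop :=
  forall (mu : R -> set X -> \bar R), (forall t, 0 <= t -> monotone_measure (mu t)) ->
  forall f, inF f -> f <> (fun _ => 0) ->
  forall t, 0 < t -> gen_level_measure A mu f t = mu t [set x | t <= f x].

End Defs.

From HB Require Import structures.
From mathcomp Require Import all_boot all_order all_algebra.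
From mathcomp Require Import all_classical all_reals all_analysis.
Import Order.TTheory GRing.Theory Num.Theory.
Local Open Scope classical_set_scope.
Local Open Scope ring_scope.

(* Both parts rest on the equivalence of (P) with A(f|E) = inf_E f, tested
   against the unanimity measures u_C(D) = [C ⊆ D].  For u_C, (P) says that
   A(f|D) >= t for some D ⊇ C exactly when f >= t on C.  If A(f|C) >= t this
   forces f >= t on C; conversely, if f >= t on C, apply (P) to f 1_C: the
   set D it provides must equal C, since outside C the function vanishes.
   When Σ = {∅, X}, measurable functions are constant, so the infimum
   characterisation reduces to idempotency (A(0|X) = 0 holds for any CAO). *)

Lemma lee_pos_levels (R : realDomainType) (x y : \bar R) : (0 <= y)%E ->
  (forall t : R, 0 < t -> (t%:E <= x)%E -> (t%:E <= y)%E) -> (x <= y)%E.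
Proof.
move=> y0 xy; case: x xy => [s| |] xy; last by rewrite leNye.
- by have [s0|s0] := leP s 0; [exact: le_trans y0 | exact: xy].
- case: y y0 xy => [r| |] y0 xy //.
  have r0 : 0 <= r by rewrite -lee_fin.
  have := xy (r + 1) (ltr_wpDl r0 ltr01) (leey _).
  by rewrite lee_fin gerDl ler10.
Qed.

Lemma trivial_measurable_fun_cst (R : realType) (d : measure_display)
    (X : measurableType d) (f : X -> R) :
  (forall B : set X, measurable B <-> (B = set0 \/ B = setT)) ->
  measurable_fun setT f -> forall x y, f x = f y.
Proof.
move=> trivX mf x y.
have := mf measurableT _ (measurable_set1 (f x)); rewrite setTI.
move=> /trivX [fx0|fxT]; last by have : (f @^-1` [set f x]) y by rewrite fxT.
by have : (f @^-1` [set f x]) x by []; rewrite fx0.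
Qed.

Section unanimity.
Context {R : realType} {d : measure_display} {X : measurableType d}.

Definition unanimity (C D : set X) : \bar R :=
  if `[< C `<=` D >] then 1%E else 0%E.

Lemma unanimity_monotone {C : set X} : C !=set0 -> monotone_measure (unanimity C).
Proof.
move=> [c Cc]; split; rewrite /unanimity.
- move=> B D _ _ BD; case: (asboolP (C `<=` B)) => CB.
    by rewrite asboolT //; exact: subset_trans BD.
  by case: asboolP.
- by rewrite asboolF // => /(_ c Cc).
- by rewrite asboolT // lte_fin ltr01.
Qed.

Lemma unanimity_ge1 (C D : set X) : (1 <= unanimity C D)%E -> C `<=` D.
Proof. by rewrite /unanimity; case: asboolP => // _; rewrite lee_fin ler10. Qed.

Lemma ereal_sup_unanimity_ge1 (C : set X) (S : set (set X)) :
  (1 <= ereal_sup [set unanimity C D | D in S])%E -> exists2 D, S D & C `<=` D.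
Proof.
move=> sup_ge1; apply: contrapT => noD.
suff : (ereal_sup [set unanimity C D | D in S] <= 0)%E.
  by move=> /(le_trans sup_ge1); rewrite lee_fin ler10.
apply: ge_ereal_sup => _ [D SD <-]; rewrite /unanimity.
by case: asboolP => // CD; exfalso; apply: noD; exists D.
Qed.

End unanimity.

Section functions.
Context {R : realType} {d : measure_display} {X : measurableType d}.

Lemma inF_measurable_ge {f : X -> R} (t : R) : inF f -> measurable [set x | t <= f x].
Proof.
move=> [mf _ _]; have := mf measurableT _ (measurable_itv `[t, +oo[).
by rewrite setTI set_itvcy.
Qed.

Lemma inF_cst (b : R) : 0 <= b -> inF (cst b : X -> R).
Proof. by move=> b0; split => //; exists b. Qed.

Lemma inF_indic (E : set X) : measurable E -> inF (\1_E : X -> R).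
Proof.
move=> mE; split; first exact: measurable_realfun.measurable_indic.
- by move=> x; rewrite indicE.
- by exists 1 => x; rewrite indicE; case: (x \in E).
Qed.

Lemma inF_mul_indic (f : X -> R) (E : set X) :
  measurable E -> inF f -> inF (f \* \1_E).
Proof.
move=> mE [mf f0 [M fM]]; split.
- exact/measurable_realfun.measurable_funM/measurable_realfun.measurable_indic.
- by move=> x; rewrite /= mulr_ge0 // indicE.
- exists M => x; rewrite /= indicE; case: (x \in E) => /=.
  + by rewrite mulr1.
  + by rewrite mulr0; exact: le_trans (f0 x) (fM x).
Qed.

Lemma ereal_inf_cst (x0 : X) (c : R) :
  ereal_inf [set ((cst c : X -> R) x)%:E | x in setT] = c%:E.
Proof.
rewrite /cst set_cst ifF ?ereal_inf1 //.
by apply/negbTE/set0P; exists x0.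
Qed.

End functions.

Section aggregation.
Context {R : realType} {d : measure_display} {X : measurableType d}.
Variable A : (X -> R) -> set X -> \bar R.
Hypothesis HA : CAO_family A.

Definition inf_aggregation := forall f, inF f -> forall E, measurable E ->
  E !=set0 -> A f E = ereal_inf [set (f x)%:E | x in E].

Lemma CAO_cst0 {E : set X} : measurable E -> E !=set0 -> A (cst 0) E = 0%E.
Proof.
move=> mE E0; case: HA => /(_ E mE E0) [A_ge0 A_mono A_indicC] _.
apply/le_anti/andP; split; last exact/A_ge0/inF_cst.
rewrite -A_indicC; apply: A_mono; first exact: inF_cst.
- exact/inF_indic/measurableC.
- by move=> x _; rewrite indicE.
Qed.

Lemma propP_level_subset (P : propP A) {h : X -> R} {C : set X} {t : R} :
  inF h -> h <> (fun _ => 0) -> measurable C -> C !=set0 -> 0 < t ->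
  (t%:E <= A h C)%E -> C `<=` [set x | t <= h x].
Proof.
move=> hF h_neq0 mC C0 t0 tAC; apply: (@unanimity_ge1 R).
rewrite -(P (fun _ => unanimity C) (fun _ _ => unanimity_monotone C0)) //.
by apply: ereal_sup_ubound; exists C => //; rewrite /unanimity asboolT.
Qed.

Lemma propP_level_superset (P : propP A) (f : X -> R) (E : set X) t :
  inF f -> measurable E -> E !=set0 -> 0 < t ->
  (forall x, E x -> t <= f x) -> (t%:E <= A f E)%E.
Proof.
move=> fF mE E0 t0 tf.
pose g := f \* (\1_E : X -> R).
have gE x : E x -> g x = f x by move=> Ex; rewrite /g /= indicE mem_set ?mulr1.
have gNE x : ~ E x -> g x = 0 by move=> NEx; rewrite /g /= indicE memNset ?mulr0.
have gF : inF g by exact: inF_mul_indic.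
have g_neq0 : g <> (fun _ => 0).
  case: E0 => e Ee /(congr1 (fun h => h e)); rewrite gE // => fe0.
  by have := tf e Ee; rewrite fe0 leNgt t0.
have [D [mD tAD] ED] : exists2 D, measurable D /\ (t%:E <= A g D)%E & E `<=` D.
  apply: (@ereal_sup_unanimity_ge1 R).
  have := P (fun _ => unanimity E) (fun _ _ => unanimity_monotone E0) g gF g_neq0 t t0.
  rewrite /gen_level_measure => ->.
  by rewrite /unanimity asboolT // => x Ex /=; rewrite gE //; exact: tf.
have DE : D `<=` E.
  move=> x Dx; apply: contrapT => NEx.
  have := propP_level_subset P gF g_neq0 mD (ex_intro _ x Dx) t0 tAD x Dx.
  by rewrite /= gNE // leNgt t0.
have D_eq_E : D = E by apply/seteqP; split.
rewrite D_eq_E in tAD; apply: le_trans tAD _.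
case: HA => /(_ E mE E0) [_ A_mono _] _.
by apply: A_mono => // x Ex; rewrite gE.
Qed.

Lemma propP_inf_aggregation : propP A -> inf_aggregation.
Proof.
move=> P f fF E mE E0; have [_ f0 _] := fF.
case: HA => /(_ E mE E0) [A_ge0 _ _] _.
apply/le_anti/andP; split; apply: lee_pos_levels.
- by apply: le_ereal_inf_tmp => _ [x _ <-]; rewrite lee_fin.
- move=> t t0 tA; apply: le_ereal_inf_tmp => _ [x Ex <-]; rewrite lee_fin.
  have [f_eq0|f_neq0] := pselect (f = (fun _ => 0)).
    by move: tA; rewrite f_eq0 (CAO_cst0 mE E0) lee_fin leNgt t0.
  exact: (propP_level_subset P fF f_neq0 mE E0 t0 tA).
- exact: A_ge0.
- move=> t t0 t_inf; apply: propP_level_superset => // x Ex.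
  by rewrite -lee_fin; apply: le_trans t_inf (ereal_inf_lbound _); exists x.
Qed.

Lemma inf_aggregation_propP : inf_aggregation -> propP A.
Proof.
move=> Ainf mu mu_mono f fF f_neq0 t t0.
case: (mu_mono t (ltW t0)) => mu_le _ _; case: HA => _ A_empty.
have mS := inF_measurable_ge t fF.
apply/le_anti/andP; split.
- apply: ge_ereal_sup => _ [D [mD tAD] <-]; apply: mu_le => // x Dx /=.
  rewrite Ainf // in tAD; last by exists x.
  by rewrite -lee_fin; apply: le_trans tAD (ereal_inf_lbound _); exists x.
- apply: ereal_sup_ubound; exists [set x | t <= f x] => //; split => //.
  have [S0|S0] := pselect ([set x | t <= f x] !=set0).
    by rewrite Ainf //; apply: le_ereal_inf_tmp => _ [x Sx <-]; rewrite lee_fin.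
  have -> : [set x | t <= f x] = set0.
    by apply/seteqP; split => x //= Sx; apply: S0; exists x.
  by rewrite A_empty // leey.
Qed.

Lemma propP_iff_inf_aggregation : propP A <-> inf_aggregation.
Proof. by split; [exact: propP_inf_aggregation | exact: inf_aggregation_propP]. Qed.

End aggregation.

Theorem theorem3p18 (R : realType) (d : measure_display) (X : measurableType d)
  (x0 : X) (A : (X -> R) -> set X -> \bar R) (HA : CAO_family A) :
  ((forall B : set X, measurable B <-> (B = set0 \/ B = setT)) ->
     (propP A <-> forall b : R, 0 < b -> A (fun _ => b) setT = b%:E)) /\
  (~ (forall B : set X, measurable B <-> (B = set0 \/ B = setT)) ->
     (propP A <-> forall f : X -> R, inF f -> forall E : set X, measurable E -> E !=set0 ->
        A f E = ereal_inf [set (f x)%:E | x in E])).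
Proof.
split => [trivX|_]; last exact: propP_iff_inf_aggregation.
rewrite propP_iff_inf_aggregation //; split => [Ainf b b0|Aid f fF E mE E0].
  by rewrite Ainf ?ereal_inf_cst //; [exact/inF_cst/ltW | exists x0].
have ET : E = setT.
  by case: ((trivX E).1 mE) => // E_eq0; case: E0 => x; rewrite E_eq0.
have [mf f0 _] := fF; subst E.
have -> : f = cst (f x0) by apply: funext => x; exact: trivial_measurable_fun_cst.
rewrite ereal_inf_cst //; have [->|fx0_neq0] := eqVneq (f x0) 0.
  exact: CAO_cst0.
by apply: Aid; rewrite lt_def fx0_neq0 f0.
Qed.
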